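(* Consider Algorithm PDS-SPP described in the context (with an arbitrary vector $v_k$ in the $x$-update), and let $$C=\sum_{k=1}^N\frac{\beta_k}{T_k}\sum_{t=1}^{T_k}\big[q_k^tU(z_k^{t-1},z)-q_k^tU(z_k^t,z)\big],\quad D=\sum_{k=1}^N\frac{\beta_k}{T_k}\sum_{t=1}^{T_k}\big[\eta_k^tV(x_k^{t-1},x)-(\mu+\eta_k^t+p_k)V(x_k^t,x)+p_kV(x_{k-1},x)\big].$$ If $q_k^t\le q_k^{t-1}$ for all $t\ge2,k\ge1$ and $\beta_kT_{k-1}q_k^1\le\beta_{k-1}T_kq_{k-1}^{T_{k-1}}$ for all $k\ge2$, then for every $z\in\mathcal Z$ $$C\le\frac{\beta_1q_1^1}{T_1}U(z_0,z)-\frac{\beta_Nq_N^{T_N}}{T_N}U(z_N,z).$$ If $\eta_k^t\le\mu+\eta_k^{t-1}+p_k$ for all $t\ge2,k\ge1$ and $\beta_kT_{k-1}(\eta_k^1+p_kT_k)\le\beta_{k-1}T_k(\mu+\eta_{k-1}^{T_{k-1}}+p_{k-1})$ for all $k\ge2$, then for every $x\in\mathcal X$ $$D\le\frac{\beta_1}{T_1}(\eta_1^1+p_1T_1)V(x_0,x)-\frac{\beta_N}{T_N}(\mu+\eta_N^{T_N}+p_N)V(x_N,x).$$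
   Context: Setting. $\mathcal X$ closed convex subset of a finite-dimensional space with norm $\|\cdot\|$; $\mathcal Z$ closed convex subset of a finite-dimensional space with norm $|\cdot|$; $\mathcal A$ linear; $h$ convex on $\mathcal Z$; $\mu\ge0$; $\nu$ $1$-strongly convex on $\mathcal X$ w.r.t. $\|\cdot\|$; $\zeta$ $1$-strongly convex on $\mathcal Z$ w.r.t. $|\cdot|$; $U(\hat z,z)=\zeta(z)-\zeta(\hat z)-\langle\zeta'(\hat z),z-\hat z\rangle$, $V(\hat x,x)=\nu(x)-\nu(\hat x)-\langle\nu'(\hat x),x-\hat x\rangle$. Algorithm: $x_0\in\mathcal X$, $z_0\in\mathcal Z$; for $k=1,\dots,N$, with some vector $v_k$ and positive integer $T_k$: $x_k^0=x_{k-1}$, $z_k^0=z_{k-1}$, $x_k^{-1}=x_{k-1}^{T_{k-1}-1}$ ($x_1^{-1}=x_0$); for $t=1,\dots,T_k$: $\tilde u_k^t=x_k^{t-1}+\alpha_k^t(x_k^{t-1}-x_k^{t-2})$, $z_k^t=\arg\min_{z\in\mathcal Z}h(z)+\langle-\mathcal A\tilde u_k^t,z\rangle+q_k^tU(z_k^{t-1},z)$, $x_k^t=\arg\min_{x\in\mathcal X}\mu\nu(x)+\langle v_k+\mathcal A^\top z_k^t,x\rangle+\eta_k^tV(x_k^{t-1},x)+p_kV(x_{k-1},x)$; $x_k=x_k^{T_k}$, $z_k=z_k^{T_k}$. Parameters: positive $\beta_k,q_k^t,\eta_k^t,p_k$. *)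

From HB Require Import structures.
From mathcomp Require Import all_boot all_order all_algebra.
From mathcomp Require Import all_classical all_reals all_analysis.
Set Implicit Arguments. Unset Strict Implicit. Unset Printing Implicit Defensive.
Import Order.TTheory GRing.Theory Num.Theory.
Import numFieldNormedType.Exports.
Local Open Scope ring_scope.
Local Open Scope classical_set_scope.

Section Defs.
Variable R : realType.

Definition dotp (n : nat) (u v : 'rV[R]_n) : R := \sum_(i < n) u 0 i * v 0 i.

Definition is_norm (n : nat) (nrm : 'rV[R]_n -> R) : Prop :=
  [/\ forall x, nrm x = 0 -> x = 0,
      forall (a : R) x, nrm (a *: x) = `|a| * nrm x &
      forall x y, nrm (x + y) <= nrm x + nrm y].

Definition convex_on (n : nat) (S : set 'rV[R]_n) : Prop :=
  forall x y (l : R), S x -> S y -> 0 <= l <= 1 -> S (l *: x + (1 - l) *: y).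

Definition convex_fun_on (n : nat) (S : set 'rV[R]_n) (f : 'rV[R]_n -> R) : Prop :=
  forall x y (l : R), S x -> S y -> 0 <= l <= 1 ->
    f (l *: x + (1 - l) *: y) <= l * f x + (1 - l) * f y.

Definition strongly_convex1_on (n : nat) (S : set 'rV[R]_n)
    (nrm : 'rV[R]_n -> R) (f : 'rV[R]_n -> R) : Prop :=
  forall x y (l : R), S x -> S y -> 0 <= l <= 1 ->
    f (l *: x + (1 - l) *: y)
      <= l * f x + (1 - l) * f y - l * (1 - l) / 2 * nrm (x - y) ^+ 2.

Definition subgrad_on (n : nat) (S : set 'rV[R]_n)
    (f : 'rV[R]_n -> R) (g : 'rV[R]_n -> 'rV[R]_n) : Prop :=
  forall xh x, S xh -> S x -> f xh + dotp (g xh) (x - xh) <= f x.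

Definition bregman (n : nat) (f : 'rV[R]_n -> R) (f' : 'rV[R]_n -> 'rV[R]_n)
    (xh x : 'rV[R]_n) : R := f x - f xh - dotp (f' xh) (x - xh).

Definition is_argmin (n : nat) (S : set 'rV[R]_n) (F : 'rV[R]_n -> R) (y : 'rV[R]_n) : Prop :=
  S y /\ forall w, S w -> F y <= F w.

End Defs.

From HB Require Import structures.
From mathcomp Require Import all_boot all_order all_algebra.
From mathcomp Require Import all_classical all_reals all_analysis.
From mathcomp Require Import lra ring zify.
Set Implicit Arguments. Unset Strict Implicit. Unset Printing Implicit Defensive.
Import Order.TTheory GRing.Theory Num.Theory.
Import numFieldNormedType.Exports.
Local Open Scope ring_scope.
Local Open Scope classical_set_scope.

(* Both estimates are nested telescoping sums.  Within epoch k, the coefficient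
   conditions in t and the nonnegativity of Bregman distances at the interior
   iterates collapse the inner sum to its first and last terms, the distances at
   x_k^0 = x_{k-1} and x_k^{T_k} = x_k (in the x-estimate the constant term
   p_k V(x_{k-1}, x) contributes T_k copies).  Weighted by beta_k / T_k, the
   outer sum over k is a telescoping sum of the same shape, and the conditions
   linking consecutive epochs are exactly its coefficient comparisons. *)

Lemma bregman_ge0 (R : realType) (n : nat) (S : set 'rV[R]_n)
    (f : 'rV[R]_n -> R) (f' : 'rV[R]_n -> 'rV[R]_n) (a b : 'rV[R]_n) :
  subgrad_on S f f' -> S a -> S b -> 0 <= bregman f f' a b.
Proof. by move=> sgf Sa Sb; rewrite /bregman subr_ge0 lerBrDr addrC sgf. Qed.

Section Telescope.
Variable R : realFieldType.

Lemma telescope_le (T : nat) (c d W : nat -> R) :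
  (0 < T)%N ->
  (forall t, (2 <= t <= T)%N -> c t <= d t.-1) ->
  (forall t, (1 <= t < T)%N -> 0 <= W t) ->
  \sum_(1 <= t < T.+1) (c t * W t.-1 - d t * W t) <= c 1%N * W 0%N - d T * W T.
Proof.
elim: T => [//|[_ _ _ _|T IH _ cd W_ge0]]; first by rewrite big_nat1.
rewrite big_nat_recr //=.
have inner : \sum_(1 <= t < T.+2) (c t * W t.-1 - d t * W t)
    <= c 1%N * W 0%N - d T.+1 * W T.+1.
  apply: IH => // t /andP[t1 tT]; first by apply: cd; rewrite t1 ltnW.
  by apply: W_ge0; rewrite t1 ltnW.
have gap : 0 <= (d T.+1 - c T.+2) * W T.+1.
  by rewrite mulr_ge0 ?subr_ge0 ?cd ?W_ge0 /=.
lra.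
Qed.

Lemma telescope_const_le (T : nat) (c d W : nat -> R) (r : R) :
  (0 < T)%N ->
  (forall t, (2 <= t <= T)%N -> c t <= d t.-1) ->
  (forall t, (1 <= t < T)%N -> 0 <= W t) ->
  \sum_(1 <= t < T.+1) (c t * W t.-1 - d t * W t + r * W 0%N)
    <= (c 1%N + r * T%:R) * W 0%N - d T * W T.
Proof.
move=> T_gt0 cd W_ge0; rewrite big_split /= sumr_const_nat subSS subn0.
have := telescope_le T_gt0 cd W_ge0; rewrite mulr_natr; lra.
Qed.

Lemma ler_divM_cross (s t b1 b2 a c : R) :
  0 < s -> 0 < t -> b1 * t * a <= b2 * s * c -> b1 / s * a <= b2 / t * c.
Proof.
move=> s_gt0 t_gt0 H.
have -> : b1 / s * a = b1 * t * a / (s * t) by field; rewrite !gt_eqF.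
have -> : b2 / t * c = b2 * s * c / (s * t) by field; rewrite !gt_eqF.
by rewrite ler_wpM2r // invr_ge0 mulr_ge0 // ltW.
Qed.

Lemma telescope_weighted_le (N : nat) (w S a b W : nat -> R) :
  (0 < N)%N ->
  (forall k, (1 <= k <= N)%N -> 0 <= w k) ->
  (forall k, (1 <= k <= N)%N -> S k <= a k * W k.-1 - b k * W k) ->
  (forall k, (2 <= k <= N)%N -> w k * a k <= w k.-1 * b k.-1) ->
  (forall k, (1 <= k < N)%N -> 0 <= W k) ->
  \sum_(1 <= k < N.+1) w k * S k <= w 1%N * a 1%N * W 0%N - w N * b N * W N.
Proof.
move=> N_gt0 w_ge0 Sk ab W_ge0.
apply: le_trans (@telescope_le N (fun k => w k * a k) (fun k => w k * b k) W
  N_gt0 ab W_ge0).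
apply: ler_sum_nat => k /andP[k1 kN].
by rewrite -!mulrA -mulrBr ler_wpM2l ?w_ge0 ?Sk ?k1.
Qed.

End Telescope.

Theorem lemma5p5 (R : realType) (n m : nat)
  (X : set 'rV[R]_n) (Z : set 'rV[R]_m)
  (nrmX : 'rV[R]_n -> R) (nrmZ : 'rV[R]_m -> R)
  (A : 'M[R]_(n, m)) (* A u := u *m A ,  A^T z := z *m A^T *)
  (h : 'rV[R]_m -> R) (mu : R)
  (nu : 'rV[R]_n -> R) (nu' : 'rV[R]_n -> 'rV[R]_n)
  (zeta : 'rV[R]_m -> R) (zeta' : 'rV[R]_m -> 'rV[R]_m)
  (N : nat) (T : nat -> nat)
  (beta p : nat -> R) (q eta alpha : nat -> nat -> R)
  (v : nat -> 'rV[R]_n)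
  (x0 : 'rV[R]_n) (z0 : 'rV[R]_m)
  (xs : nat -> nat -> 'rV[R]_n) (zs : nat -> nat -> 'rV[R]_m) :
  (* setting *)
  closed X -> convex_on X -> closed Z -> convex_on Z ->
  is_norm nrmX -> is_norm nrmZ ->
  convex_fun_on Z h -> 0 <= mu ->
  strongly_convex1_on X nrmX nu -> subgrad_on X nu nu' ->
  strongly_convex1_on Z nrmZ zeta -> subgrad_on Z zeta zeta' ->
  (1 <= N)%N ->
  (forall k, (1 <= k <= N)%N -> (0 < T k)%N) ->
  (forall k, (1 <= k <= N)%N -> 0 < beta k /\ 0 < p k) ->
  (forall k t, (1 <= k <= N)%N -> (1 <= t <= T k)%N -> 0 < q k t /\ 0 < eta k t) ->
  X x0 -> Z z0 ->
  let U := bregman zeta zeta' in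
  let V := bregman nu nu' in
  (* x_k, z_k  (with x_0, z_0 the initial points) *)
  let xk := fun k => if k is 0 then x0 else xs k (T k) in
  let zk := fun k => if k is 0 then z0 else zs k (T k) in
  (* x_k^{t-2} for t >= 1, using x_k^{-1} = x_{k-1}^{T_{k-1}-1}, x_1^{-1} = x_0 *)
  let xprev := fun k t =>
    if t == 1%N then (if k == 1%N then x0 else xs k.-1 (T k.-1).-1)
    else xs k (t - 2)%N in
  (* the algorithm *)
  (forall k, (1 <= k <= N)%N -> xs k 0%N = xk k.-1 /\ zs k 0%N = zk k.-1) ->
  (forall k t, (1 <= k <= N)%N -> (1 <= t <= T k)%N ->
     let ut := xs k t.-1 + alpha k t *: (xs k t.-1 - xprev k t) in
     is_argmin Z (fun z => h z + dotp (- (ut *m A)) z + q k t * U (zs k t.-1) z)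
       (zs k t) /\
     is_argmin X (fun x => mu * nu x + dotp (v k + zs k t *m A^T) x
                           + eta k t * V (xs k t.-1) x + p k * V (xk k.-1) x)
       (xs k t)) ->
  let C := fun z => \sum_(1 <= k < N.+1) (beta k / (T k)%:R) *
      \sum_(1 <= t < (T k).+1) (q k t * U (zs k t.-1) z - q k t * U (zs k t) z) in
  let D := fun x => \sum_(1 <= k < N.+1) (beta k / (T k)%:R) *
      \sum_(1 <= t < (T k).+1) (eta k t * V (xs k t.-1) x
           - (mu + eta k t + p k) * V (xs k t) x + p k * V (xk k.-1) x) in
  ((forall k t, (1 <= k <= N)%N -> (2 <= t <= T k)%N -> q k t <= q k t.-1) ->
   (forall k, (2 <= k <= N)%N ->
      beta k * (T k.-1)%:R * q k 1%N <= beta k.-1 * (T k)%:R * q k.-1 (T k.-1)) ->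
   forall z, Z z ->
     C z <= beta 1%N * q 1%N 1%N / (T 1%N)%:R * U z0 z
            - beta N * q N (T N) / (T N)%:R * U (zk N) z)
  /\
  ((forall k t, (1 <= k <= N)%N -> (2 <= t <= T k)%N ->
      eta k t <= mu + eta k t.-1 + p k) ->
   (forall k, (2 <= k <= N)%N ->
      beta k * (T k.-1)%:R * (eta k 1%N + p k * (T k)%:R)
        <= beta k.-1 * (T k)%:R * (mu + eta k.-1 (T k.-1) + p k.-1)) ->
   forall x, X x ->
     D x <= beta 1%N / (T 1%N)%:R * (eta 1%N 1%N + p 1%N * (T 1%N)%:R) * V x0 x
            - beta N / (T N)%:R * (mu + eta N (T N) + p N) * V (xk N) x).
Proof.
move=> _ _ _ _ _ _ _ _ _ sg_nu _ sg_zeta N_gt0 T_gt0 beta_p_gt0 _ _ _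
  U V xk zk xprev init alg C D.
have iter_mem k t : (1 <= k <= N)%N -> (1 <= t <= T k)%N ->
    Z (zs k t) /\ X (xs k t).
  by move=> kN tT; have [[Zz _] [Xx _]] := alg k t kN tT.
have last_mem k : (1 <= k < N)%N -> Z (zk k) /\ X (xk k).
  by case: k => // k kN; apply: iter_mem; rewrite ?leqnn ?T_gt0; lia.
have w_ge0 k : (1 <= k <= N)%N -> 0 <= beta k / (T k)%:R.
  by move=> kN; rewrite divr_ge0 ?ler0n ?ltW ?(beta_p_gt0 k kN).1.
have w_cross k a c : (2 <= k <= N)%N ->
    beta k * (T k.-1)%:R * a <= beta k.-1 * (T k)%:R * c ->
    beta k / (T k)%:R * a <= beta k.-1 / (T k.-1)%:R * c.
  by move=> kN; apply: ler_divM_cross; rewrite ltr0n T_gt0 //; lia.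
split => [q_mono q_link z Zz | eta_mono eta_link x Xx].
- rewrite (mulrAC (beta 1%N)) (mulrAC (beta N)).
  apply: (telescope_weighted_le (w := fun k => beta k / (T k)%:R)
    (a := fun k => q k 1%N) (b := fun k => q k (T k)) (W := fun k => U (zk k) z)) => //.
  + case=> // k kN /=; rewrite -(init _ kN).2.
    apply: telescope_le => [|t tT|t tT]; rewrite ?T_gt0 ?q_mono //.
    by apply: bregman_ge0 sg_zeta _ Zz; apply: (iter_mem _ _ kN _).1; lia.
  + by move=> k kN; apply: w_cross (q_link k kN).
  + by move=> k kN; apply: bregman_ge0 sg_zeta (last_mem k kN).1 Zz.
- apply: (telescope_weighted_le (w := fun k => beta k / (T k)%:R)
    (a := fun k => eta k 1%N + p k * (T k)%:R) (b := fun k => mu + eta k (T k) + p k)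
    (W := fun k => V (xk k) x)) => //.
  + case=> // k kN /=; rewrite -(init _ kN).1.
    apply: telescope_const_le => [|t tT|t tT]; rewrite ?T_gt0 ?eta_mono //.
    by apply: bregman_ge0 sg_nu _ Xx; apply: (iter_mem _ _ kN _).2; lia.
  + by move=> k kN; apply: w_cross (eta_link k kN).
  + by move=> k kN; apply: bregman_ge0 sg_nu (last_mem k kN).2 Xx.
Qed.
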